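(* Let $\mathcal{A}\in\mathbb{R}^{I_1\times I_2\times I_3}$, $r_2=\min\{I_1,I_2\}$, and let $\boldsymbol{A}_{(3)}=\boldsymbol{U}^{(3)}\boldsymbol{S}^{(3)}\boldsymbol{V}^{(3)T}$ be an SVD with singular values in descending order, $\boldsymbol{U}^{(3)}\in\mathbb{R}^{I_3\times I_3}$ orthogonal. Let $\widetilde{\mathcal{A}}=\mathcal{A}\times_3\boldsymbol{U}^{(3)T}$ and for $i=1,\dots,I_3$ let $s_{jji}$ ($j=1,\dots,r_2$) denote the singular values of the frontal slice $\widetilde{\mathcal{A}}(:,:,i)$ in descending order (the diagonal entries of the O-SVD core $\mathcal{S}$). Let $\boldsymbol{k}=[k_1;\boldsymbol{k}_2]$ with $1\le k_1\le I_3$ and $\boldsymbol{k}_2=[k_{21},\dots,k_{2k_1}]^T$, $0\le k_{2i}\le r_2$. Define the $\boldsymbol{k}$-term truncated O-SVD $$\mathcal{A}_{\boldsymbol{k}}=(\mathcal{U}_{k_2}*_3\mathcal{S}_{k_2}*_3\mathcal{V}_{k_2})\times_3\boldsymbol{U}^{(3)}_{k_1},$$ where $\boldsymbol{U}^{(3)}_{k_1}=\boldsymbol{U}^{(3)}(:,1:k_1)$ and, for each $i=1,\dots,k_1$, the slice $\mathcal{U}_{k_2}(:,:,i)\mathcal{S}_{k_2}(:,:,i)\mathcal{V}_{k_2}(:,:,i)$ equals the rank-$k_{2i}$ truncated SVD of $\widetilde{\mathcal{A}}(:,:,i)$ (i.e. $\mathcal{U}_{k_2}(:,1:k_{2i},i)$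 holds its $k_{2i}$ leading left singular vectors, $\mathcal{S}_{k_2}(1:k_{2i},1:k_{2i},i)=\mathrm{diag}(s_{11i},\dots,s_{k_{2i}k_{2i}i})$, $\mathcal{V}_{k_2}(1:k_{2i},:,i)$ holds the transposes of its $k_{2i}$ leading right singular vectors, all other entries zero). Then $$\|\mathcal{A}-\mathcal{A}_{\boldsymbol{k}}\|_F^2=\sum_{i=1}^{k_1}\sum_{j=k_{2i}+1}^{r_2}s_{jji}^2+\sum_{i=k_1+1}^{I_3}\sum_{j=1}^{r_2}s_{jji}^2 .$$
   Context: For $\mathcal{A}\in\mathbb{R}^{I_1\times I_2\times I_3}$, $\mathcal{A}(:,:,k)$ is the $k$-th frontal slice; $\boldsymbol{A}_{(3)}\in\mathbb{R}^{I_3\times I_1I_2}$ is the mode-3 unfolding whose columns are the mode-3 fibers. The mode-3 product with $\boldsymbol{M}\in\mathbb{R}^{J\times I_3}$ is $(\mathcal{A}\times_3\boldsymbol{M})_{ijl}=\sum_k a_{ijk}m_{lk}$. The slicewise product $\mathcal{A}*_3\mathcal{B}$ of tensors with compatible frontal slices is defined by $(\mathcal{A}*_3\mathcal{B})(:,:,k)=\mathcal{A}(:,:,k)\mathcal{B}(:,:,k)$. $\|\cdot\|_F$ is the square root of the sum of squares of all entries. *)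

From HB Require Import structures.
From mathcomp Require Import all_boot all_order all_algebra.
From mathcomp Require Import reals.
Set Implicit Arguments. Unset Strict Implicit. Unset Printing Implicit Defensive.
Import Order.TTheory GRing.Theory Num.Theory.
Local Open Scope ring_scope.

(* A third-order tensor in R^{I1 x I2 x I3}, represented by its frontal slices:
   T k = T(:,:,k). *)
Definition tensor (R : Type) (I1 I2 I3 : nat) := 'I_I3 -> 'M[R]_(I1, I2).

(* Mode-3 unfolding A_(3) in R^{I3 x I1 I2}: row k is vec of the k-th frontal
   slice, so the columns are the mode-3 fibers (column order = mxvec order). *)
Definition unfold3 (R : Type) I1 I2 I3 (A : tensor R I1 I2 I3) : 'M[R]_(I3, I1 * I2) :=
  \matrix_(k, c) mxvec (A k) 0 c.

Definition mode3 (R : pzRingType) I1 I2 I3 J (A : tensor R I1 I2 I3)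
  (M : 'M[R]_(J, I3)) : tensor R I1 I2 J :=
  fun l => \sum_(k < I3) M l k *: A k.

Definition sprod3 (R : pzRingType) I1 I2 I4 I3 (A : tensor R I1 I2 I3)
  (B : tensor R I2 I4 I3) : tensor R I1 I4 I3 :=
  fun k => A k *m B k.

Definition tfrob (R : rcfType) I1 I2 I3 (T : tensor R I1 I2 I3) : R :=
  Num.sqrt (\sum_(k < I3) \sum_(i < I1) \sum_(j < I2) T k i j ^+ 2).

Definition is_svd (R : realFieldType) m n (M : 'M[R]_(m, n)) (U : 'M[R]_m)
  (S : 'M[R]_(m, n)) (V : 'M[R]_n) : Prop :=
  [/\ U^T *m U = 1%:M, V^T *m V = 1%:M,
      (forall (i : 'I_m) (j : 'I_n), (i : nat) <> j -> S i j = 0),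
      (forall (i : 'I_m) (j : 'I_n), (i : nat) = j -> 0 <= S i j) /\
      (forall (i1 j1 : 'I_m) (i2 j2 : 'I_n), (i1 : nat) = i2 -> (j1 : nat) = j2 ->
          (i1 <= j1)%N -> S j1 j2 <= S i1 i2)
    & M = U *m S *m V^T].

Definition sdiag (R : Type) m n (S : 'M[R]_(m, n)) (j : 'I_(minn m n)) : R :=
  S (widen_ord (geq_minl m n) j) (widen_ord (geq_minr m n) j).

Definition Utrunc (R : pzRingType) m (U : 'M[R]_m) (k : nat) : 'M[R]_m :=
  \matrix_(a, b) (if (b < k)%N then U a b else 0).
Definition Strunc (R : pzRingType) m n (S : 'M[R]_(m, n)) (k : nat) : 'M[R]_(m, n) :=
  \matrix_(a, b) (if (a < k)%N && (b < k)%N then S a b else 0).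
Definition Vtrunc (R : pzRingType) n (V : 'M[R]_n) (k : nat) : 'M[R]_n :=
  \matrix_(a, b) (if (a < k)%N then V^T a b else 0).

From HB Require Import structures.
From mathcomp Require Import all_boot all_order all_algebra.
From mathcomp Require Import reals.
Import Order.TTheory GRing.Theory Num.Theory.
Set Implicit Arguments. Unset Strict Implicit. Unset Printing Implicit Defensive.
Local Open Scope ring_scope.

(* Rotating the mode-3 fibres by the orthogonal matrix U3^T preserves the
   Frobenius norm, so the error of the truncation is the sum over the frontal
   slices of the rotated tensor A x_3 U3^T of the errors made on each slice:
   slice i <= k1 is replaced by its rank-k2(i) truncated SVD, whose error is
   the tail of its squared singular values, and slice i > k1 is dropped,
   which costs all of its squared singular values. *)

Section Frobenius.
Variable R : comPzRingType.

Definition mxfrob2 m n (M : 'M[R]_(m, n)) : R := \sum_i \sum_j M i j ^+ 2.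

Lemma mxtrace_mul_trmx m n (M : 'M[R]_(m, n)) : \tr (M *m M^T) = mxfrob2 M.
Proof.
apply: eq_bigr => i _; rewrite mxE.
by apply: eq_bigr => j _; rewrite mxE expr2.
Qed.

Lemma mxfrob2_tr m n (M : 'M[R]_(m, n)) : mxfrob2 M^T = mxfrob2 M.
Proof. by rewrite /mxfrob2 exchange_big; do 2!apply: eq_bigr => ? _; rewrite mxE. Qed.

Lemma mxfrob2_col n (v : 'cV[R]_n) : mxfrob2 v = \sum_i v i 0 ^+ 2.
Proof. by apply: eq_bigr => i _; rewrite big_ord1. Qed.

Lemma mxfrob2_orthogonal_mull m n (U : 'M[R]_m) (X : 'M[R]_(m, n)) :
  U^T *m U = 1%:M -> mxfrob2 (U *m X) = mxfrob2 X.
Proof.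
move=> hU; rewrite -!mxtrace_mul_trmx trmx_mul mulmxA mxtrace_mulC !mulmxA.
by rewrite hU mul1mx.
Qed.

Lemma mxfrob2_orthogonal_mulr m n (V : 'M[R]_n) (X : 'M[R]_(m, n)) :
  V^T *m V = 1%:M -> mxfrob2 (X *m V^T) = mxfrob2 X.
Proof.
by move=> hV; rewrite -mxfrob2_tr trmx_mul trmxK mxfrob2_orthogonal_mull ?mxfrob2_tr.
Qed.

Lemma mxfrob2_diag m n (D : 'M[R]_(m, n)) :
  is_diag_mx D -> mxfrob2 D = \sum_(j < minn m n) sdiag D j ^+ 2.
Proof.
move=> /is_diag_mxP hD.
have row_diag a : \sum_b D a b ^+ 2 = \sum_(b : 'I_n | (b : nat) == a) D a b ^+ 2.
  rewrite (bigID (fun b : 'I_n => (b : nat) == a)) /= [X in _ + X]big1 ?addr0 //.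
  by move=> b /negbTE hb; rewrite hD ?expr0n // eq_sym hb.
rewrite /mxfrob2; under eq_bigr do rewrite row_diag.
rewrite (bigID (fun a : 'I_m => (a < minn m n)%N)) /= [X in _ + X]big1 ?addr0.
  rewrite (big_ord_narrow (geq_minl m n)); apply: eq_bigr => j _.
  by rewrite (big_pred1 (widen_ord (geq_minr m n) j)) // => b; rewrite -val_eqE.
move=> a ha; apply: big1 => b /eqP hb.
by move: ha; rewrite leq_min ltn_ord -hb ltn_ord.
Qed.

End Frobenius.

Section TruncatedSVD.
Variables (R : realFieldType) (m n : nat).
Implicit Types (M S : 'M[R]_(m, n)) (U : 'M[R]_m) (V : 'M[R]_n).

Lemma is_svd_diag M U S V : is_svd M U S V -> is_diag_mx S.
Proof. by case=> _ _ hS _ _; apply/is_diag_mxP => i j /eqP; apply: hS. Qed.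

Lemma mxfrob2_svd M U S V :
  is_svd M U S V -> mxfrob2 M = \sum_(j < minn m n) sdiag S j ^+ 2.
Proof.
move=> svdM; have [hU hV _ _ ->] := svdM.
rewrite mxfrob2_orthogonal_mulr // mxfrob2_orthogonal_mull //.
exact: mxfrob2_diag (is_svd_diag svdM).
Qed.

Lemma trunc_svdE U S V k :
  Utrunc U k *m Strunc S k *m Vtrunc V k = U *m Strunc S k *m V^T.
Proof.
apply/matrixP => a c; rewrite !mxE; apply: eq_bigr => b _; rewrite !mxE.
case: (ltnP b k) => hb; last first.
  by rewrite mulr0 big1 ?mul0r // => x _; rewrite !mxE [(b < k)%N]ltnNge hb andbF mulr0.
congr (_ * _); apply: eq_bigr => x _; rewrite !mxE.
by case: (ltnP x k) => //= _; rewrite mul0r mulr0.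
Qed.

Lemma is_diag_sub_Strunc S k : is_diag_mx S -> is_diag_mx (S - Strunc S k).
Proof.
move=> /is_diag_mxP hS; apply/is_diag_mxP => i j hij.
by rewrite !mxE hS // if_same subrr.
Qed.

Lemma mxfrob2_sub_trunc_svd M U S V k : is_svd M U S V ->
  mxfrob2 (M - Utrunc U k *m Strunc S k *m Vtrunc V k) =
  \sum_(j < minn m n | (k <= j)%N) sdiag S j ^+ 2.
Proof.
move=> svdM; have [hU hV _ _ ->] := svdM.
rewrite trunc_svdE -mulmxBl -mulmxBr mxfrob2_orthogonal_mulr //.
rewrite mxfrob2_orthogonal_mull // mxfrob2_diag; last first.
  exact/is_diag_sub_Strunc/(is_svd_diag svdM).
rewrite [RHS]big_mkcond; apply: eq_bigr => j _; rewrite /sdiag !mxE /=.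
by case: ltnP => _; rewrite ?subrr ?expr0n ?subr0.
Qed.

End TruncatedSVD.

Definition pad3 (R : nmodType) I1 I2 k n (X : tensor R I1 I2 k) : tensor R I1 I2 n :=
  fun i => if insub (val i) is Some b then X b else 0.
Arguments pad3 {R I1 I2 k} n X _.

Section Mode3.
Variables (R : pzRingType) (I1 I2 : nat).
Notation tensor := (tensor R I1 I2).

Lemma pad3_widen k n (h : (k <= n)%N) (X : tensor k) b : pad3 n X (widen_ord h b) = X b.
Proof. by rewrite /pad3 /= valK. Qed.

Lemma pad3_ge k n (X : tensor k) (i : 'I_n) : (k <= i)%N -> pad3 n X i = 0.
Proof. by move=> hi; rewrite /pad3 insubN // -leqNgt. Qed.

Lemma mode3_widen k n p (h : (k <= n)%N) (X : tensor k) (M : 'M[R]_(p, n)) :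
  mode3 X (\matrix_(a, b) M a (widen_ord h b)) =1 mode3 (pad3 n X) M.
Proof.
move=> l; rewrite /mode3 [RHS](bigID (fun i : 'I_n => (i < k)%N)) /=.
rewrite [X in _ + X]big1 => [|i]; last by rewrite -leqNgt => /pad3_ge ->; rewrite scaler0.
rewrite addr0 (big_ord_narrow h); apply: eq_bigr => b _.
by rewrite mxE pad3_widen.
Qed.

Lemma mode3_mul n p q (A : tensor n) (M : 'M[R]_(p, n)) (N : 'M[R]_(q, p)) :
  mode3 (mode3 A M) N =1 mode3 A (N *m M).
Proof.
move=> l; rewrite /mode3; under eq_bigr do rewrite scaler_sumr.
rewrite exchange_big; apply: eq_bigr => k _; rewrite mxE scaler_suml.
by apply: eq_bigr => j _; rewrite scalerA.
Qed.

Lemma mode3_id n (A : tensor n) : mode3 A 1%:M =1 A.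
Proof.
move=> l; rewrite /mode3 (bigD1 l) //= big1 => [|k /negbTE hk]; last first.
  by rewrite mxE eq_sym hk scale0r.
by rewrite mxE eqxx scale1r addr0.
Qed.

Lemma mode3B n p (A B : tensor n) (M : 'M[R]_(p, n)) l :
  mode3 (fun k => A k - B k) M l = mode3 A M l - mode3 B M l.
Proof. by rewrite /mode3 -sumrB; apply: eq_bigr => k _; rewrite scalerBr. Qed.

End Mode3.

Section TensorFrobenius.
Variables (R : rcfType) (I1 I2 : nat).

Lemma tfrob_sqr n (T : tensor R I1 I2 n) : tfrob T ^+ 2 = \sum_k mxfrob2 (T k).
Proof.
rewrite sqr_sqrtr //; apply: sumr_ge0 => k _; apply: sumr_ge0 => i _.
by apply: sumr_ge0 => j _; apply: sqr_ge0.
Qed.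

Lemma eq_tfrob n (T T' : tensor R I1 I2 n) : T =1 T' -> tfrob T = tfrob T'.
Proof. by move=> eqT; rewrite /tfrob; under eq_bigr do rewrite eqT. Qed.

Lemma tfrob_mode3_orthogonal n (T : tensor R I1 I2 n) (U : 'M[R]_n) :
  U^T *m U = 1%:M -> tfrob (mode3 T U) = tfrob T.
Proof.
move=> hU; rewrite /tfrob; congr Num.sqrt.
rewrite exchange_big [RHS]exchange_big; apply: eq_bigr => a _.
rewrite exchange_big [RHS]exchange_big; apply: eq_bigr => b _.
have := mxfrob2_orthogonal_mull (\col_k T k a b) hU.
rewrite !mxfrob2_col; under [in RHS]eq_bigr do rewrite mxE.
move=> <-; apply: eq_bigr => l _; rewrite summxE !mxE; congr (_ ^+ 2).
by apply: eq_bigr => k _; rewrite !mxE.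
Qed.

End TensorFrobenius.

Theorem theorem3p3 (R : realType) (I1 I2 I3 : nat) (A : tensor R I1 I2 I3)
  (U3 : 'M[R]_I3) (S3 : 'M[R]_(I3, I1 * I2)) (V3 : 'M[R]_(I1 * I2))
  (hsvd3 : is_svd (unfold3 A) U3 S3 V3)
  (Us : 'I_I3 -> 'M[R]_I1) (Ss : 'I_I3 -> 'M[R]_(I1, I2)) (Vs : 'I_I3 -> 'M[R]_I2)
  (hsvd : forall i : 'I_I3, is_svd (mode3 A U3^T i) (Us i) (Ss i) (Vs i))
  (k1 : nat) (hk1pos : (1 <= k1)%N) (hk1 : (k1 <= I3)%N)
  (k2 : 'I_k1 -> nat) (hk2 : forall i, (k2 i <= minn I1 I2)%N) :
  let Uk2 : tensor R I1 I1 k1 := fun i => Utrunc (Us (widen_ord hk1 i)) (k2 i) in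
  let Sk2 : tensor R I1 I2 k1 := fun i => Strunc (Ss (widen_ord hk1 i)) (k2 i) in
  let Vk2 : tensor R I2 I2 k1 := fun i => Vtrunc (Vs (widen_ord hk1 i)) (k2 i) in
  let U3k1 : 'M[R]_(I3, k1) := \matrix_(a, b) U3 a (widen_ord hk1 b) in
  let Ak : tensor R I1 I2 I3 := mode3 (sprod3 (sprod3 Uk2 Sk2) Vk2) U3k1 in
  tfrob (fun k => A k - Ak k) ^+ 2 =
    \sum_(i < k1) \sum_(j < minn I1 I2 | (k2 i <= j)%N)
        sdiag (Ss (widen_ord hk1 i)) j ^+ 2
  + \sum_(i < I3 | (k1 <= i)%N) \sum_(j < minn I1 I2) sdiag (Ss i) j ^+ 2.
Proof.
move=> Uk2 Sk2 Vk2 U3k1 Ak.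
have [hU _ _ _ _] := hsvd3.
pose At := mode3 A U3^T.
pose E := fun i => At i - pad3 I3 (sprod3 (sprod3 Uk2 Sk2) Vk2) i.
have AE : (fun k => A k - Ak k) =1 mode3 E U3.
  by move=> l; rewrite /E mode3B -mode3_widen /At mode3_mul mulmx1C // mode3_id.
rewrite (eq_tfrob AE) tfrob_mode3_orthogonal // tfrob_sqr.
rewrite (bigID (fun i : 'I_I3 => (i < k1)%N)) /= (big_ord_narrow hk1).
congr (_ + _).
  apply: eq_bigr => i _; rewrite /E pad3_widen.
  exact: mxfrob2_sub_trunc_svd (hsvd (widen_ord hk1 i)).
apply: eq_big => [i|i]; rewrite -leqNgt // => hi.
by rewrite /E pad3_ge // subr0 (mxfrob2_svd (hsvd i)).
Qed.
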